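(* Let $V,W$ be locally convex spaces, $\Omega\subset V$ open, and $D=d+A$ a connection on $\Omega\times W\to\Omega$. Let $I\subset\mathbb R$ be an interval. Suppose $x_n\in C^1(I,\Omega)$ converge in the $C^1$ topology to $x\colon I\to\Omega$ (i.e. $x_n\to x$ and $dx_n/dt\to dx/dt$ uniformly on $I$), and that parallel lifts $\xi_n\in C^1(I,W)$ of $x_n$ converge uniformly to $\xi\colon I\to W$. Then $\xi$ is $C^1$ and is a parallel lift of $x$.
   Context: All locally convex spaces are real, Hausdorff and sequentially complete. A connection on $\Omega\times W\to\Omega$ is the operator $D_\xi\varphi(v)=d\varphi(v,\xi)+A(v,\xi)\varphi(v)$ on $C^1$ maps $\varphi\colon\Omega\to W$, where the connection form $A\colon\Omega\times V\to\mathrm{Hom}(W,W)$ (continuous linear maps) is linear in $\xi$ and $(v,\xi,w)\mapsto A(v,\xi)w\in W$ is continuous. Given a $C^1$ curve $x\colon I\to\Omega$, a parallel lift of $x$ is a $C^1$ map $\xi\colon I\to W$ with $\frac{d\xi}{dt}+A\big(x,\frac{dx}{dt}\big)\xi=0$ on $I$. *)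

From HB Require Import structures.
From mathcomp Require Import all_boot all_order all_algebra.
From mathcomp Require Import all_classical all_reals all_analysis.
Set Implicit Arguments. Unset Strict Implicit. Unset Printing Implicit Defensive.
Import Order.TTheory GRing.Theory Num.Theory numFieldNormedType.Exports.
Local Open Scope classical_set_scope.
Local Open Scope ring_scope.

Definition seq_complete (E : uniformType) : Prop :=
  forall u : nat -> E, cauchy (u @ \oo) -> exists l : E, u @ \oo --> l.

Definition has_deriv_on (R : realType) (E : tvsType R) (I : set R)
    (f f' : R -> E) : Prop :=
  forall t, I t ->
    (fun s => (s - t)^-1 *: (f s - f t)) @ within (I `\ t) (nbhs t) --> f' t.

Definition C1_on (R : realType) (E : tvsType R) (I : set R) (f f' : R -> E) : Prop :=
  has_deriv_on I f f' /\ {within I, continuous f'}.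

(* Connection form A : Omega x V -> Hom(W,W): linear in xi, each A(v,xi) linear,
   and (v,xi,w) |-> A(v,xi) w jointly continuous on Omega x V x W. *)
Definition connection_form (R : realType) (V W : tvsType R) (Om : set V)
    (A : V -> V -> W -> W) : Prop :=
  [/\ (forall v, Om v -> forall (c : R) xi1 xi2 w,
         A v (c *: xi1 + xi2) w = c *: A v xi1 w + A v xi2 w),
      (forall v, Om v -> forall xi (c : R) w1 w2,
         A v xi (c *: w1 + w2) = c *: A v xi w1 + A v xi w2) &
      {within [set p : V * V * W | Om p.1.1],
         continuous (fun p : V * V * W => A p.1.1 p.1.2 p.2)}].

Definition parallel_lift (R : realType) (V W : tvsType R) (A : V -> V -> W -> W)
    (I : set R) (x x' : R -> V) (xi xi' : R -> W) : Prop :=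
  C1_on I xi xi' /\ forall t, I t -> xi' t + A (x t) (x' t) (xi t) = 0.

From HB Require Import structures.
From mathcomp Require Import all_boot all_order all_algebra.
From mathcomp Require Import all_classical all_reals all_analysis.
From mathcomp Require Import ring lra.
Import Order.TTheory GRing.Theory Num.Theory numFieldNormedType.Exports.
Local Open Scope classical_set_scope.
Local Open Scope ring_scope.
Set Implicit Arguments. Unset Strict Implicit. Unset Printing Implicit Defensive.

(* Put g := - A (x, x', xi).  Joint continuity of A makes the derivatives
   xi_n' = - A (x_n, x_n', xi_n) converge to g t as (n, s) --> (oo, t), and xi is
   continuous as a uniform limit.  To see that xi' = g, fix a convex symmetric
   neighbourhood D of 0 and its Minkowski gauge p.  The mean value inequality
   p (phi b - phi a - (b - a) c) <= M |b - a|, valid whenever p (phi' - c) <= M on an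
   interval, applied to xi_n near t with c = g t and passed to the limit n --> oo,
   bounds p of the difference quotient of xi minus g t by 1/2, so that quotient
   lies in g t + D.  The mean value inequality is proved by continuous induction
   on the real function u |-> p (phi u - phi a - (u - a) c), which is
   left-continuous and has right upper slopes at most M. *)

Section topological_module_limits.
Context (R : numFieldType) (E : topologicalLmodType R).
Context (T : Type) (F : set_system T) {FF : Filter F}.

Lemma tvs_cvgZ (s : T -> R) (f : T -> E) (k : R) (a : E) :
  s @ F --> k -> f @ F --> a -> (fun t => s t *: f t) @ F --> k *: a.
Proof.
move=> hs hf; apply: (@continuous2_cvg _ R^o E E F FF s f ( *:%R) k a) => //.
exact: (@scale_continuous R E (k, a)).
Qed.

Lemma tvs_cvgD (f g : T -> E) (a b : E) :
  f @ F --> a -> g @ F --> b -> (fun t => f t + g t) @ F --> a + b.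
Proof.
move=> hf hg; apply: (@continuous2_cvg _ E E E F FF f g +%R a b) => //.
exact: (@add_continuous E (a, b)).
Qed.

Lemma tvs_cvgN (f : T -> E) (a : E) : f @ F --> a -> (fun t => - f t) @ F --> - a.
Proof. by move=> hf; apply: continuous_cvg => //; exact: opp_continuous. Qed.

Lemma tvs_cvgB (f g : T -> E) (a b : E) :
  f @ F --> a -> g @ F --> b -> (fun t => f t - g t) @ F --> a - b.
Proof. by move=> hf hg; apply: tvs_cvgD => //; exact: tvs_cvgN. Qed.

Lemma tvs_subr_cvg0 (f : T -> E) (a : E) :
  f @ F --> a <-> (fun t => f t - a) @ F --> 0.
Proof.
split=> [fa | fa0]; first by rewrite -(subrr a); exact: tvs_cvgB fa (cvg_cst a).
have -> : f = (fun t => f t - a + a) by apply/funext => t; rewrite subrK.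
by rewrite -[X in _ --> X]add0r; exact: tvs_cvgD fa0 (cvg_cst a).
Qed.

End topological_module_limits.

Lemma convex_setP (R : numDomainType) (M : lmodType R) (A : set M) :
  convex_set A <->
  forall x y (l : R), 0 <= l -> l <= 1 -> A x -> A y -> A (l *: x + (1 - l) *: y).
Proof.
split=> [cA x y l l0 l1 Ax Ay | cA x y l /set_mem Ax /set_mem Ay].
  by have /set_mem := cA x y (Itv01 l0 l1) (mem_set Ax) (mem_set Ay).
by apply/mem_set; exact: cA (ge0 l) (le1 l) Ax Ay.
Qed.

Section increment_of_right_slopes.
Context (R : realType) (h : R -> R) (al be : R).
Hypotheses (al_le_be : al <= be) (h_left : forall u, al < u <= be -> h @ u^'- --> h u).

Let bound_at_left_limit (K u : R) : al < u <= be ->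
  (forall w, al < w < u -> h w <= h al + K * (w - al)) -> h u <= h al + K * (u - al).
Proof.
move=> /andP[alu ube] hw.
have h_shift : (fun w => h w - K * (w - al)) @ u^'- --> h u - K * (u - al).
  apply: cvgB; first by apply: h_left; rewrite alu ube.
  apply: cvg_at_left_filter; apply: cvgM; first exact: cvg_cst.
  by apply: cvgB; [exact: cvg_id | exact: cvg_cst].
rewrite -lerBlDr; apply: (closed_cvg _ (@closed_le _ (h al)) _ _ h_shift).
apply: filterS2 (nbhs_left_gt alu) (nbhs_left_lt u) => w alw wu /=.
by rewrite lerBlDr; apply: hw; rewrite alw.
Qed.

Let increment_le_exact (K : R) :
  (forall u, al <= u < be -> \forall v \near u^'+, h v <= h u + K * (v - u)) ->
  h be <= h al + K * (be - al).
Proof.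
move=> hK; pose ok u := forall w, al <= w <= u -> h w <= h al + K * (w - al).
pose S := [set u | al <= u <= be /\ ok u].
have S_al : S al.
  split; first by rewrite lexx.
  by move=> w /le_anti ->; rewrite subrr mulr0 addr0.
have S_sup : has_sup S by split; [exists al | exists be => u [/andP[]]].
set u0 := sup S.
have alu0 : al <= u0 := sup_upper_bound S_sup S_al.
have u0be : u0 <= be by apply: ge_sup; [exists al | move=> u [/andP[]]].
have ok_lt w : al <= w < u0 -> h w <= h al + K * (w - al).
  move=> /andP[alw wu0]; have := @sup_adherent _ S (u0 - w).
  rewrite subr_gt0 wu0 opprB addrC subrK => /(_ isT S_sup)[u [_ oku] wu].
  by apply: oku; rewrite alw ltW.
have ok_u0 : ok u0.
  move=> w /andP[alw]; rewrite le_eqVlt => /predU1P[->|wu0]; last by apply: ok_lt; rewrite alw.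
  have [<-|alu0'] := eqVneq al u0; first by rewrite subrr mulr0 addr0.
  apply: bound_at_left_limit; first by rewrite lt_neqAle alu0' alu0 u0be.
  by move=> v /andP[alv vu0]; apply: ok_lt; rewrite (ltW alv) vu0.
have u0_be : u0 = be.
  apply/eqP; rewrite eq_le u0be /=; rewrite leNgt; apply/negP => u0lt.
  have := hK u0; rewrite alu0 u0lt => /(_ isT)/(nbhs_ballP _ _)[d /= d0 Hd].
  pose v := Num.min (u0 + d / 2) be.
  have u0v : u0 < v by rewrite lt_min u0lt ltrDl divr_gt0.
  have v_le : v <= u0 + d / 2 by rewrite ge_min lexx.
  suff : S v by move/(sup_upper_bound S_sup); rewrite leNgt u0v.
  split; first by rewrite (ltW (le_lt_trans alu0 u0v)) ge_min lexx orbT.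
  move=> w /andP[alw wv]; have [wu0|u0w] := leP w u0; first by apply: ok_u0; rewrite alw.
  have hw : h w <= h u0 + K * (w - u0).
    by apply: Hd (u0w); rewrite /ball /= ltr_norml; apply/andP; split; lra.
  have := ok_u0 u0; rewrite alu0 lexx => /(_ isT) hu0.
  apply: le_trans hw _.
  have -> : h al + K * (w - al) = h al + K * (u0 - al) + K * (w - u0) by ring.
  by rewrite lerD2r.
by apply: ok_u0; rewrite al_le_be u0_be lexx.
Qed.

Lemma increment_le_of_right_slopes (K : R) :
  (forall u e, al <= u < be -> 0 < e ->
     \forall v \near u^'+, h v <= h u + (K + e) * (v - u)) ->
  h be <= h al + K * (be - al).
Proof.
move=> hK; have [<-|alnbe] := eqVneq al be; first by rewrite subrr mulr0 addr0.
have ab : 0 < be - al by rewrite subr_gt0 lt_neqAle alnbe al_le_be.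
apply/ler_addgt0Pr => e e0.
have := increment_le_exact (fun u hu => hK u (e / (be - al)) hu (divr_gt0 e0 ab)).
by move/le_trans; apply; rewrite -addrA lerD2l mulrDl divfK ?gt_eqF.
Qed.

End increment_of_right_slopes.

Lemma within_nbhsS (T : topologicalType) (A B : set T) (x : T) :
  (\forall y \near within A (nbhs x), B y) -> within A (nbhs x) `=>` within B (nbhs x).
Proof.
move=> AB P BP; change (nbhs x (fun y => A y -> B y)) in AB.
change (nbhs x (fun y => B y -> P y)) in BP; change (nbhs x (fun y => A y -> P y)).
by apply: filterS2 AB BP => y AB' BP' Ay; exact: BP' (AB' Ay).
Qed.

Lemma has_deriv_on_subset (R : realType) (E : tvsType R) (I J : set R) (f f' : R -> E) :
  J `<=` I -> has_deriv_on I f f' -> has_deriv_on J f f'.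
Proof.
move=> JI df t Jt; apply: cvg_trans (df t (JI t Jt)); apply: cvg_app.
by apply: within_subset => // s [/JI].
Qed.

Lemma has_deriv_on_continuous (R : realType) (E : tvsType R) (I : set R) (f f' : R -> E) :
  has_deriv_on I f f' -> {within I, continuous f}.
Proof.
move=> df; apply/subspace_continuousP => t It.
have : (fun s => (s - t) *: ((s - t)^-1 *: (f s - f t)) + f t)
    @ within (I `\ t) (nbhs t) --> 0 *: f' t + f t.
  apply: tvs_cvgD; last exact: cvg_cst.
  apply: tvs_cvgZ; last exact: df.
  by rewrite -(subrr t); apply: cvgB; [exact: cvg_within_filter cvg_id | exact: cvg_cst].
rewrite scale0r add0r => df0 P Pft; have {df0} := df0 P Pft.
change (nbhs t (fun s => (I `\ t) s -> P ((s - t) *: ((s - t)^-1 *: (f s - f t)) + f t))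
  -> nbhs t (fun s => I s -> P (f s))).
apply: filterS => s Ps Is; have [-> | st] := eqVneq s t; first exact: nbhs_singleton.
have := Ps (conj Is (elimN eqP st)).
by rewrite scalerA divff ?subr_eq0 // scale1r subrK.
Qed.

Lemma has_deriv_on_cvg_left (R : realType) (E : tvsType R) (I : set R) (f f' : R -> E)
    (al u : R) :
  is_interval I -> I al -> I u -> al < u -> has_deriv_on I f f' -> f @ u^'- --> f u.
Proof.
move=> I_itv Ial Iu alu df.
apply: cvg_trans ((subspace_continuousP _ _).1 (has_deriv_on_continuous df) u Iu).
apply: cvg_app; apply: within_nbhsS.
apply: filterS2 (nbhs_left_gt alu) (nbhs_left_lt u) => v alv vu.
by apply: (I_itv _ _ Ial Iu); rewrite !ltW.
Qed.

Section minkowski_gauge.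
Context (R : realType) (W : tvsType R) (D : set W).

Definition gauge (x : W) : R := inf [set r : R | 0 < r /\ D (r^-1 *: x)].

Hypotheses (D_convex : convex_set D) (D_nbhs0 : nbhs 0 D).
Hypothesis D_sym : forall z, D z -> D (- z).

Lemma nbhs0_absorbing (x : W) : exists2 r : R, 0 < r & D (r^-1 *: x).
Proof.
have : \forall k \near (0 : R), D (k *: x).
  apply: (@tvs_cvgZ R W R (nbhs (0 : R)) _ id (fun=> x) 0 x cvg_id (cvg_cst x)).
  by rewrite scale0r.
move=> /(nbhs_ballP _ _)[e /= e0 De].
exists (e / 2)^-1; first by rewrite invr_gt0 divr_gt0.
rewrite invrK; apply: De; rewrite /ball /= sub0r normrN gtr0_norm ?divr_gt0 //.
by rewrite ltr_pdivrMr // ltr_pMr // ltr1n.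
Qed.

Let gauge_has_inf (x : W) : has_inf [set r : R | 0 < r /\ D (r^-1 *: x)].
Proof.
split; last by exists 0 => r [/ltW].
by have [r r0 Dr] := nbhs0_absorbing x; exists r.
Qed.

Lemma gauge_le (x : W) (r : R) : 0 < r -> D (r^-1 *: x) -> gauge x <= r.
Proof. by move=> r0 Dr; apply: ge_inf; [exact: (gauge_has_inf x).2 |]. Qed.

Lemma gauge_ge0 (x : W) : 0 <= gauge x.
Proof. by apply: lb_le_inf; [exact: (gauge_has_inf x).1 | move=> r [/ltW]]. Qed.

Let D_conv : forall x y l, 0 <= l -> l <= 1 -> D x -> D y -> D (l *: x + (1 - l) *: y).
Proof. exact/convex_setP. Qed.

Lemma gauge_lt1 (x : W) : gauge x < 1 -> D x.
Proof.
move=> g1; have g0 : 0 < 1 - gauge x by rewrite subr_gt0.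
have [e [e0 De]] := inf_adherent g0 (gauge_has_inf x).
rewrite addrC subrK => e1.
have := D_conv (ltW e0) (ltW e1) De (nbhs_singleton D_nbhs0).
by rewrite scaler0 addr0 scalerA divff ?gt_eqF // scale1r.
Qed.

Lemma gauge0 : gauge 0 = 0.
Proof.
apply/eqP; rewrite eq_le gauge_ge0 andbT; apply/ler_addgt0Pr => e e0.
by rewrite add0r; apply: gauge_le; rewrite // scaler0; exact: nbhs_singleton.
Qed.

(* [x + y] is a convex combination of [r^-1 x] and [r'^-1 y], rescaled by [r + r']. *)
Lemma gaugeD (x y : W) : gauge (x + y) <= gauge x + gauge y.
Proof.
have key r r' : 0 < r -> D (r^-1 *: x) -> 0 < r' -> D (r'^-1 *: y) ->
    gauge (x + y) <= r + r'.
  move=> r0 Dr r'0 Dr'; have rr0 : 0 < r + r' by rewrite addr_gt0.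
  apply: gauge_le => //.
  have l0 : 0 <= r / (r + r') by rewrite divr_ge0 // ltW.
  have l1 : r / (r + r') <= 1 by rewrite ler_pdivrMr // mul1r lerDl ltW.
  have := D_conv l0 l1 Dr Dr'.
  have -> : 1 - r / (r + r') = r' / (r + r') by field; rewrite gt_eqF.
  have e1 : r / (r + r') * r^-1 = (r + r')^-1 by field; rewrite !gt_eqF.
  have e2 : r' / (r + r') * r'^-1 = (r + r')^-1 by field; rewrite !gt_eqF.
  by rewrite !scalerA e1 e2 -scalerDr.
rewrite -lerBlDr; apply: lb_le_inf; first exact: (gauge_has_inf x).1.
move=> r [r0 Dr]; rewrite lerBlDr (addrC r) -lerBlDr.
apply: lb_le_inf; first exact: (gauge_has_inf y).1.
by move=> r' [r'0 Dr']; rewrite lerBlDr (addrC r'); exact: key.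
Qed.

Lemma gaugeZ (k : R) (x : W) : gauge (k *: x) <= `|k| * gauge x.
Proof.
have [->|k0] := eqVneq k 0; first by rewrite scale0r gauge0 normr0 mul0r.
have nk : 0 < `|k| by rewrite normr_gt0.
rewrite mulrC -ler_pdivrMr //; apply: lb_le_inf; first exact: (gauge_has_inf x).1.
move=> r [r0 Dr]; rewrite ler_pdivrMr //; apply: gauge_le; first by rewrite mulr_gt0.
rewrite scalerA; have [kp|kn] := ltrP 0 k.
  by rewrite gtr0_norm // invfM -mulrA mulVf ?gt_eqF // mulr1.
rewrite ler0_norm // invfM invrN mulrN mulNr -mulrA mulVf // mulr1 scaleNr.
exact: D_sym.
Qed.

Lemma gaugeN (x : W) : gauge (- x) = gauge x.
Proof.
have gN y : gauge (- y) <= gauge y.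
  by rewrite -scaleN1r (le_trans (gaugeZ _ _)) // normrN normr1 mul1r.
by apply/eqP; rewrite eq_le gN -{1}(opprK x) gN.
Qed.

Lemma gauge_near0 (e : R) : 0 < e -> \forall z \near (0 : W), gauge z <= e.
Proof.
move=> e0; have := nbhs0Z (lt0r_neq0 e0) D_nbhs0; apply: filterS => _ [d Dd <-].
by apply: gauge_le; rewrite // scalerA mulVf ?gt_eqF // scale1r.
Qed.

Lemma gauge_continuous : continuous gauge.
Proof.
move=> x; apply/cvgrPdist_le => e e0; near=> y.
have : gauge (y - x) <= e by near: y; exact: (tvs_subr_cvg0 _ _).1 cvg_id _ (gauge_near0 e0).
have := gaugeD (x - y) y; have := gaugeD (y - x) x.
rewrite !subrK -(opprB y x) gaugeN => h1 h2 h3.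
by rewrite ler_norml; apply/andP; split; lra.
Unshelve. all: by end_near. Qed.

Let increment_split (phi : R -> W) (c : W) (al u v : R) :
  phi v - phi al - (v - al) *: c =
  (phi u - phi al - (u - al) *: c) + (phi v - phi u - (v - u) *: c).
Proof.
rewrite (_ : v - al = (v - u) + (u - al)); last by rewrite addrA subrK.
rewrite scalerDl opprD [RHS]addrACA; congr (_ + _); first by rewrite addrC subrKA.
by rewrite addrC.
Qed.

Section mean_value.
Context (I : set R) (phi phi' : R -> W) (c : W) (M : R).
Hypotheses (I_itv : is_interval I) (dphi : has_deriv_on I phi phi').
Hypothesis phi'M : forall u, I u -> gauge (phi' u - c) <= M.

Let gauge_right_slope (u be e : R) : I u -> I be -> u < be -> 0 < e ->
  \forall v \near u^'+, gauge (phi v - phi u - (v - u) *: c) <= (M + e) * (v - u).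
Proof.
move=> Iu Ibe ube e0.
have : \forall v \near within (I `\ u) (nbhs u),
    gauge ((v - u)^-1 *: (phi v - phi u) - phi' u) <= e.
  exact: (tvs_subr_cvg0 _ _).1 (@dphi u Iu) _ (gauge_near0 e0).
have right_in : \forall v \near u^'+, (I `\ u) v.
  apply: filterS2 (nbhs_right_gt u) (nbhs_right_lt ube) => v uv vbe; split.
    by apply: (I_itv Iu Ibe); rewrite !ltW.
  by move=> /= vu; move: uv; rewrite vu ltxx.
move=> /(within_nbhsS right_in); apply: filterS2 (nbhs_right_gt u) => v uv qv.
have vu0 : 0 < v - u by rewrite subr_gt0.
have -> : phi v - phi u - (v - u) *: c =
    (v - u) *: ((v - u)^-1 *: (phi v - phi u) - phi' u) + (v - u) *: (phi' u - c).
  by rewrite -scalerDr subrKA scalerBr scalerA divff ?gt_eqF // scale1r.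
rewrite mulrDl [leRHS]addrC; apply: le_trans (gaugeD _ _) _; apply: lerD.
  by apply: le_trans (gaugeZ _ _) _; rewrite gtr0_norm // mulrC ler_wpM2r // ltW.
apply: le_trans (gaugeZ _ _) _; rewrite gtr0_norm // mulrC ler_wpM2r ?phi'M //.
exact: ltW.
Qed.

Let gauge_increment_le_sorted (al be : R) : I al -> I be -> al <= be ->
  gauge (phi be - phi al - (be - al) *: c) <= M * (be - al).
Proof.
move=> Ial Ibe albe; pose psi u := phi u - phi al - (u - al) *: c.
have psi_al : gauge (psi al) = 0 by rewrite /psi !subrr scale0r subr0 gauge0.
rewrite -[leRHS]add0r -psi_al.
apply: (@increment_le_of_right_slopes R (gauge \o psi) al be albe) => //.
- move=> u /andP[alu ube]; apply: (cvg_comp psi gauge _ (@gauge_continuous (psi u))).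
  have Iu : I u by apply: (I_itv Ial Ibe); rewrite ltW.
  have phi_left := has_deriv_on_cvg_left I_itv Ial Iu alu dphi.
  rewrite /psi; apply: tvs_cvgB; first exact: tvs_cvgB phi_left (cvg_cst _).
  apply: tvs_cvgZ (cvg_cst _).
  by apply: cvgB; [exact: cvg_within_filter cvg_id | exact: cvg_cst].
- move=> u e /andP[alu ube] e0.
  have Iu : I u by apply: (I_itv Ial Ibe); rewrite alu ltW.
  apply: filterS (gauge_right_slope Iu Ibe ube e0) => v.
  rewrite /= /psi (increment_split phi c al u) -/(psi u) => hv.
  by apply: le_trans (gaugeD _ _) _; rewrite lerD2l.
Qed.

Lemma gauge_increment_le (al be : R) : I al -> I be ->
  gauge (phi be - phi al - (be - al) *: c) <= M * `|be - al|.
Proof.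
move=> Ial Ibe; have [albe|beal] := leP al be.
  by rewrite ger0_norm ?subr_ge0 //; exact: gauge_increment_le_sorted.
rewrite ltr0_norm ?subr_lt0 // opprB -gaugeN.
have -> : - (phi be - phi al - (be - al) *: c) = phi al - phi be - (al - be) *: c.
  by rewrite opprD opprK opprB -scaleNr opprB.
exact: gauge_increment_le_sorted (ltW beal).
Qed.

End mean_value.

Lemma gauge_increment_le_limit (I : set R) (fn fn' : nat -> R -> W) (f : R -> W)
    (c : W) (M : R) :
  is_interval I -> (forall n, has_deriv_on I (fn n) (fn' n)) ->
  (forall s, I s -> fn ^~ s @ \oo --> f s) ->
  (\forall n \near \oo, forall u, I u -> gauge (fn' n u - c) <= M) ->
  forall al be, I al -> I be -> gauge (f be - f al - (be - al) *: c) <= M * `|be - al|.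
Proof.
move=> I_itv dfn fn_f fn'M al be Ial Ibe.
have fn_incr : (fun n => gauge (fn n be - fn n al - (be - al) *: c)) @ \oo
    --> gauge (f be - f al - (be - al) *: c).
  apply: (cvg_comp _ gauge _ (@gauge_continuous _)).
  by apply: tvs_cvgB (cvg_cst _); exact: tvs_cvgB (fn_f _ Ibe) (fn_f _ Ial).
apply: (closed_cvg _ (@closed_le _ _) _ _ fn_incr); apply: filterS fn'M => n fn'Mn.
exact: (gauge_increment_le I_itv (dfn n) fn'Mn Ial Ibe).
Qed.

End minkowski_gauge.

Lemma nbhs0_convex_sym (R : realType) (W : tvsType R) (N : set W) : nbhs 0 N ->
  exists D : set W,
    [/\ convex_set D, nbhs 0 D, (forall z, D z -> D (- z)) & D `<=` N].
Proof.
move=> N0; have [B B_convex [B_open B_basis]] := @locally_convex R W.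
have [U [BU U0] UN] := B_basis 0 N N0.
have /convex_setP U_convex := B_convex U (mem_set BU).
have nU : nbhs 0 U by apply: open_nbhs_nbhs; split; [exact: B_open|].
exists (fun z => U z /\ U (- z)); split.
- apply/convex_setP => y z l l0 l1 [Uy Uy'] [Uz Uz']; split; first exact: U_convex.
  by rewrite opprD -!scalerN; exact: U_convex.
- apply: filterI (nU) _; have := nbhs0N nU.
  by apply: filterS => _ [z Uz <-]; rewrite opprK.
- by move=> z [Uz Uz']; rewrite opprK.
- by move=> z [/UN].
Qed.

Definition at_oo_within (R : realType) (I : set R) (t : R) : set_system (nat * R) :=
  within (fun q => I q.2) (filter_prod \oo (nbhs t)).

Section uniform_limits.
Context (R : realType) (U : uniformType) (I : set R) (G : nat -> R -> U) (f : R -> U).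
Hypothesis G_f : {uniform I, G @ \oo --> f}.

Lemma uniform_cvg_entourage (E : set (U * U)) :
  entourage E -> \forall n \near \oo, forall s, I s -> E (f s, G n s).
Proof.
move=> entE; apply: (@G_f [set h | forall s, I s -> E (f s, h s)]).
by apply/uniform_nbhs; exists E; split.
Qed.

Lemma uniform_cvg_pointwise (s : R) : I s -> G ^~ s @ \oo --> f s.
Proof.
move=> Is; apply/cvg_app_entourageP => E entE.
by apply: filterS (uniform_cvg_entourage entE) => n /(_ s Is).
Qed.

Lemma uniform_limit_continuous_within :
  (forall n, {within I, continuous (G n)}) -> {within I, continuous f}.
Proof.
move=> Gc; apply/subspace_continuousP => t It.
apply/cvg_app_entourageP => E entE.
have E2 := entourage_split_ent entE.
have [N [GNf fGN]] := filter_ex (filterI (uniform_cvg_entourage E2)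
  (uniform_cvg_entourage (entourage_inv (entourage_split_ent E2)))).
have := (subspace_continuousP _ _).1 (Gc N) t It _
  (nbhs_entourage (G N t) (entourage_split_ent E2)).
rewrite !nbhs_simpl /within /= /prop_near1 /= !nbhs_simpl.
apply: filterS => s GNts Is; apply: (entourage_split (G N t)) => //; first exact: GNf.
apply: (entourage_split (G N s)) => //; last exact: fGN.
by have /xsectionP := GNts Is.
Qed.

Lemma uniform_cvg_at_oo_within (t : R) : {within I, continuous f} -> I t ->
  (fun q => G q.1 q.2) @ at_oo_within I t --> f t.
Proof.
move=> fc It; apply/cvg_app_entourageP => E entE.
have E2 := entourage_split_ent entE.
have := (subspace_continuousP _ _).1 fc t It _ (nbhs_entourage (f t) E2).
rewrite !nbhs_simpl /within /= /prop_near1 /= !nbhs_simpl => ftf.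
rewrite /at_oo_within /within /= /prop_near1 /= !nbhs_simpl.
exists (fun n => forall s, I s -> split_ent E (f s, G n s),
        fun s => I s -> xsection (split_ent E) (f t) (f s)).
  by split; [exact: uniform_cvg_entourage|].
move=> [n s] [/= fGn fts] Is.
apply: (entourage_split (f s)) => //; last exact: fGn.
by have /xsectionP := fts Is.
Qed.

End uniform_limits.

Lemma is_interval_setI_ball (R : realType) (I : set R) (t d : R) :
  is_interval I -> is_interval (I `&` ball t d).
Proof.
move=> I_itv x y [Ix xt] [Iy yt] z xzy; split; first exact: I_itv Ix Iy z xzy.
move: xzy xt yt; rewrite /ball /= !ltr_norml => /andP[? ?] /andP[? ?] /andP[? ?].
by apply/andP; split; lra.
Qed.

Lemma has_deriv_on_limit (R : realType) (W : tvsType R) (I : set R)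
    (fn fn' : nat -> R -> W) (f g : R -> W) :
  is_interval I -> (forall n, has_deriv_on I (fn n) (fn' n)) ->
  (forall s, I s -> fn ^~ s @ \oo --> f s) ->
  (forall t, I t -> (fun q => fn' q.1 q.2) @ at_oo_within I t --> g t) ->
  has_deriv_on I f g.
Proof.
move=> I_itv dfn fn_f fn'_g t It; apply/tvs_subr_cvg0.
move=> N /nbhs0_convex_sym[D [D_convex D_nbhs0 D_sym DN]].
have half_gt0 : (0 : R) < 2^-1 by rewrite invr_gt0.
have := fn'_g t It _ ((tvs_subr_cvg0 _ _).1 cvg_id _
  (gauge_near0 D_nbhs0 half_gt0)).
rewrite /at_oo_within /within /= /prop_near1 /= !nbhs_simpl.
move=> [[Pn Qs] /= [Pn_oo /(nbhs_ballP _ _)[d /= d0 Qs_d]] fn'_half].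
pose K := I `&` ball t d.
have K_itv : is_interval K by exact: is_interval_setI_ball.
have Kt : K t by split; [|exact: ballxx].
have incr s : K s -> gauge D (f s - f t - (s - t) *: g t) <= 2^-1 * `|s - t|.
  move=> Ks; apply: (gauge_increment_le_limit D_convex D_nbhs0 D_sym K_itv) => //.
  - by move=> n; apply: has_deriv_on_subset (dfn n) => u [].
  - by move=> u [Iu _]; exact: fn_f.
  - apply: filterS Pn_oo => n Pn_n u [Iu tu].
    by apply: (fn'_half (n, u)) => //; split => //; exact: Qs_d.
apply/nbhs_ballP; exists d => // s ts [Is /eqP st]; apply/DN/(gauge_lt1 D_convex D_nbhs0).
have st0 : s - t != 0 by rewrite subr_eq0.
have -> : (s - t)^-1 *: (f s - f t) - g t = (s - t)^-1 *: (f s - f t - (s - t) *: g t).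
  by rewrite [RHS]scalerBr scalerA mulVf // scale1r.
apply: le_lt_trans (gaugeZ D_nbhs0 D_sym _ _) _; rewrite normfV.
have inv_ge0 : 0 <= `|s - t|^-1 by rewrite invr_ge0.
apply: le_lt_trans (ler_wpM2l inv_ge0 (incr s (conj Is ts))) _.
by rewrite mulrCA mulVf ?normr_eq0 // mulr1 invf_lt1 // ltr1n.
Qed.

Lemma within_continuous_cvg_comp (T : Type) (U V : topologicalType) (A : set U)
    (f : U -> V) (F : set_system T) {FF : Filter F} (h : T -> U) (p : U) :
  {within A, continuous f} -> A p -> h @ F --> p -> (\forall q \near F, A (h q)) ->
  f (h q) @[q --> F] --> f p.
Proof.
move=> fc Ap hp hA.
have hAp : h @ F --> within A (nbhs p).
  move=> P; rewrite nbhs_simpl /within /= /prop_near1 /= !nbhs_simpl => AP.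
  by apply: filterS2 (hp _ AP) hA => q /[apply].
exact: cvg_trans (cvg_app _ hAp) ((subspace_continuousP _ _).1 fc p Ap).
Qed.

Lemma connection_form_cvg (R : realType) (V W : tvsType R) (Om : set V)
    (A : V -> V -> W -> W) (T : Type) (F : set_system T) {FF : Filter F}
    (y y' : T -> V) (w : T -> W) (v v' : V) (z : W) :
  connection_form Om A -> Om v ->
  y @ F --> v -> y' @ F --> v' -> w @ F --> z -> (\forall q \near F, Om (y q)) ->
  A (y q) (y' q) (w q) @[q --> F] --> A v v' z.
Proof.
case=> _ _ A_cont Omv yv y'v' wz Omy.
exact: (within_continuous_cvg_comp (p := (v, v', z)) (h := fun q => (y q, y' q, w q))
  A_cont Omv (cvg_pair (cvg_pair yv y'v') wz) Omy).
Qed.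

Unset Implicit Arguments.

Theorem lemma6p1 (R : realType) (V W : tvsType R)
  (hV : hausdorff_space V) (hW : hausdorff_space W)
  (cV : seq_complete V) (cW : seq_complete W)
  (Om : set V) (Om_open : open Om)
  (A : V -> V -> W -> W) (hA : connection_form Om A)
  (I : interval R) (a b : R) (ab : a < b) (aI : a \in I) (bI : b \in I)
  (xn xn' : nat -> R -> V) (xnC1 : forall n, C1_on [set` I] (xn n) (xn' n))
  (xnOm : forall n t, t \in I -> Om (xn n t))
  (x x' : R -> V) (xC1 : C1_on [set` I] x x') (xOm : forall t, t \in I -> Om (x t))
  (xn_cvg : {uniform [set` I], xn @ \oo --> x})
  (xn'_cvg : {uniform [set` I], xn' @ \oo --> x'})
  (xin xin' : nat -> R -> W)
  (xin_lift : forall n, parallel_lift A [set` I] (xn n) (xn' n) (xin n) (xin' n))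
  (xi : R -> W) (xin_cvg : {uniform [set` I], xin @ \oo --> xi}) :
  exists xi' : R -> W, parallel_lift A [set` I] x x' xi xi'.
Proof.
set J := [set` I].
have x_cont := has_deriv_on_continuous xC1.1.
have xi_cont : {within J, continuous xi}.
  apply: uniform_limit_continuous_within xin_cvg _ => n.
  exact: has_deriv_on_continuous (xin_lift n).1.1.
pose g t := - A (x t) (x' t) (xi t).
have xi'_g : has_deriv_on J xi g.
  apply: has_deriv_on_limit (fun n => (xin_lift n).1.1) _ _.
  - exact: interval_is_interval.
  - exact: uniform_cvg_pointwise xin_cvg.
  move=> t Jt; apply: cvg_trans (tvs_cvgN (connection_form_cvg hA (xOm t Jt)
    (uniform_cvg_at_oo_within xn_cvg x_cont Jt)
    (uniform_cvg_at_oo_within xn'_cvg xC1.2 Jt)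
    (uniform_cvg_at_oo_within xin_cvg xi_cont Jt) _)).
    apply: near_eq_cvg; apply: filterS (withinT _ _) => q Jq /=.
    by apply/esym/eqP; rewrite -addr_eq0; exact/eqP/(xin_lift q.1).2.
  by apply: filterS (withinT _ _) => q Jq; exact: xnOm.
exists g; split; last by move=> t Jt; rewrite addNr.
split=> //; apply/subspace_continuousP => t Jt; apply: tvs_cvgN.
have near_Om : \forall s \near within J (nbhs t), Om (x s).
  by apply: filterS (withinT _ _) => s Js; exact: xOm.
apply: connection_form_cvg hA (xOm t Jt) _ _ _ near_Om.
- exact: (subspace_continuousP _ _).1 x_cont t Jt.
- exact: (subspace_continuousP _ _).1 xC1.2 t Jt.
- exact: (subspace_continuousP _ _).1 xi_cont t Jt.
Qed.
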